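(* Let $\mathbf{a}\in\mathbb{C}^N$, $h_{aw}\in\mathbb{C}$, $\sigma_w^2>0$, $\epsilon>0$ and $L>0$, and let $$\mathbf{A}=\begin{bmatrix}\mathbf{a}\mathbf{a}^H & \mathbf{a}h_{aw}^*\\ h_{aw}\mathbf{a}^H & |h_{aw}|^2\end{bmatrix}\in\mathbb{C}^{(N+1)\times(N+1)}.$$ For Hermitian positive semidefinite $\mathbf{W}\in\mathbb{C}^{(N+1)\times(N+1)}$, the constraint $$\ln\!\left(1+\frac{\mathrm{Tr}(\mathbf{A}\mathbf{W})}{\sigma_w^2}\right)-\frac{\mathrm{Tr}(\mathbf{A}\mathbf{W})}{\mathrm{Tr}(\mathbf{A}\mathbf{W})+\sigma_w^2}\le \frac{2\epsilon^2}{L}$$ is equivalent to $$\left(1+\frac{\mathrm{Tr}(\mathbf{A}\mathbf{W})}{\sigma_w^2}\right)\ln\!\left(1+\frac{\mathrm{Tr}(\mathbf{A}\mathbf{W})}{\sigma_w^2}\right)-\left(1+\frac{2\epsilon^2}{L}\right)\frac{\mathrm{Tr}(\mathbf{A}\mathbf{W})}{\sigma_w^2}\le\frac{2\epsilon^2}{L},$$ and the latter is a convex constraint with respect to $\mathbf{W}$ (on the cone of Hermitian positive semidefinite matrices).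
   Context: The first inequality is the covertness constraint $\mathcal{D}(\mathbb{P}_0|\mathbb{P}_1)\le 2\epsilon^2$ (Kullback–Leibler divergence over $L$ channel uses) after the lifting $\mathbf{W}=\mathbf{w}\mathbf{w}^H$ of a scaled reflection vector; $\mathrm{Tr}$ denotes the trace. *)

From HB Require Import structures.
From mathcomp Require Import all_boot all_order all_algebra.
From mathcomp Require Import complex.
From mathcomp Require Import reals exp.
Set Implicit Arguments. Unset Strict Implicit. Unset Printing Implicit Defensive.
Import Order.TTheory GRing.Theory Num.Theory.
Local Open Scope ring_scope.
Local Open Scope complex_scope.

Definition ctrmx (R : rcfType) m n (M : 'M[R[i]]_(m, n)) : 'M[R[i]]_(n, m) :=
  (map_mx (fun z => z^*) M)^T.

Definition hermitian_psd (R : rcfType) n (W : 'M[R[i]]_n) : Prop :=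
  ctrmx W = W /\ forall x : 'cV[R[i]]_n, 0 <= (ctrmx x *m W *m x) 0 0.

Definition Amx (R : rcfType) N (a : 'cV[R[i]]_N) (h : R[i]) : 'M[R[i]]_(N + 1) :=
  block_mx (a *m ctrmx a) (a *m (h^*)%:M)
           ((h%:M : 'M_1) *m ctrmx a) ((`|h| ^+ 2)%:M).

(* Tr(A W), a real number for Hermitian PSD A, W; we take its real part *)
Definition trAW (R : rcfType) N (a : 'cV[R[i]]_N) (h : R[i]) (W : 'M[R[i]]_(N + 1)) : R :=
  complex.Re (\tr (Amx a h *m W)).

Definition constr1 (R : realType) N (a : 'cV[R[i]]_N) (h : R[i]) (s2 : R)
  (W : 'M[R[i]]_(N + 1)) : R :=
  let t := trAW a h W in ln (1 + t / s2) - t / (t + s2).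

Definition constr2 (R : realType) N (a : 'cV[R[i]]_N) (h : R[i]) (s2 c : R)
  (W : 'M[R[i]]_(N + 1)) : R :=
  let t := trAW a h W in (1 + t / s2) * ln (1 + t / s2) - (1 + c) * (t / s2).

From HB Require Import structures.
From mathcomp Require Import all_boot all_order all_algebra.
From mathcomp Require Import complex.
From mathcomp Require Import reals exp.
From mathcomp Require Import ring lra.
Set Implicit Arguments. Unset Strict Implicit. Unset Printing Implicit Defensive.
Import Order.TTheory GRing.Theory Num.Theory.
Local Open Scope ring_scope.
Local Open Scope complex_scope.

(* Write v = [a; h], so that A = v v^H and Tr(A W) = v^H W v: this is
   nonnegative and affine in W on the PSD cone.  With x = Tr(A W) / s2 >= 0
   one has Tr(A W) / (Tr(A W) + s2) = x / (1 + x), and multiplying the first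
   constraint by 1 + x > 0 gives the second one.  The second constraint is
   y ln y (y = 1 + x) minus an affine function of x, and y ln y is convex:
   summing the tangent bound u (ln w - ln u) <= w - u at the mean point w of a
   convex combination gives Jensen's inequality for it. *)

Lemma mulr_lnB_le (R : realType) (u w : R) : 0 < u -> 0 < w ->
  u * (ln w - ln u) <= w - u.
Proof.
move=> u_gt0 w_gt0.
have wu_gt0 : 0 < w / u by exact: divr_gt0.
have := @le_ln1Dx R (w / u - 1) ltac:(lra).
rewrite addrCA subrr addr0 ln_div ?posrE // => ln_le.
have -> : w - u = u * (w / u - 1) by field; exact: lt0r_neq0.
by rewrite ler_pM2l.
Qed.

Lemma convex_xlnx (R : realType) (u1 u2 lam : R) :
  0 < u1 -> 0 < u2 -> 0 <= lam <= 1 ->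
  (lam * u1 + (1 - lam) * u2) * ln (lam * u1 + (1 - lam) * u2)
  <= lam * (u1 * ln u1) + (1 - lam) * (u2 * ln u2).
Proof.
move=> u1_gt0 u2_gt0 /andP[lam_ge0 lam_le1].
set w := lam * u1 + (1 - lam) * u2.
have w_gt0 : 0 < w.
  have [lam_gt0|lam_le0] := ltrP 0 lam.
    by apply: ltr_pwDl; [exact: mulr_gt0 | apply: mulr_ge0; lra].
  by rewrite /w (_ : lam = 0) ?mul0r ?add0r ?subr0 ?mul1r //; lra.
have tangent1 := ler_wpM2l lam_ge0 (mulr_lnB_le u1_gt0 w_gt0).
have tangent2 := ler_wpM2l (ltac:(lra) : 0 <= 1 - lam) (mulr_lnB_le u2_gt0 w_gt0).
have : lam * (w - u1) + (1 - lam) * (w - u2) = 0 by rewrite /w; ring.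
have : w * ln w - (lam * (u1 * ln u1) + (1 - lam) * (u2 * ln u2)) =
  lam * (u1 * (ln w - ln u1)) + (1 - lam) * (u2 * (ln w - ln u2)).
  by rewrite /w; ring.
lra.
Qed.

Section ScalarConstraint.
Variables (R : realType) (s2 c : R).
Hypothesis s2_gt0 : 0 < s2.

Definition covert_lhs (t : R) :=
  (1 + t / s2) * ln (1 + t / s2) - (1 + c) * (t / s2).

Lemma add1r_div_gt0 (t : R) : -s2 < t -> 0 < 1 + t / s2.
Proof.
move=> t_gt.
by rewrite (_ : 1 + t / s2 = (t + s2) / s2) ?divr_gt0 //; [lra | field; exact: lt0r_neq0].
Qed.

Lemma covert_constraint_equiv (t : R) : -s2 < t ->
  ln (1 + t / s2) - t / (t + s2) <= c <-> covert_lhs t <= c.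
Proof.
rewrite /covert_lhs => t_gt.
have s2_neq0 : s2 != 0 by exact: lt0r_neq0.
have ts2_neq0 : t + s2 != 0 by apply: lt0r_neq0; lra.
have y_gt0 := add1r_div_gt0 t_gt.
set y := 1 + t / s2 in y_gt0 *; set l := ln y.
have -> : t / (t + s2) = (y - 1) / y.
  by rewrite /y; field; rewrite s2_neq0 addrC ts2_neq0.
have -> : t / s2 = y - 1 by rewrite /y; ring.
rewrite -(ler_pM2l y_gt0).
have -> : y * (l - (y - 1) / y) = y * l - (y - 1) by field; exact: lt0r_neq0.
by split; lra.
Qed.

Lemma convex_covert_lhs (t1 t2 lam : R) :
  -s2 < t1 -> -s2 < t2 -> 0 <= lam <= 1 ->
  covert_lhs (lam * t1 + (1 - lam) * t2)
  <= lam * covert_lhs t1 + (1 - lam) * covert_lhs t2.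
Proof.
move=> t1_gt t2_gt lam01.
have s2_neq0 : s2 != 0 by exact: lt0r_neq0.
have := convex_xlnx (add1r_div_gt0 t1_gt) (add1r_div_gt0 t2_gt) lam01.
rewrite /covert_lhs (_ : 1 + (lam * t1 + (1 - lam) * t2) / s2 =
                lam * (1 + t1 / s2) + (1 - lam) * (1 + t2 / s2)); last by field.
rewrite (_ : (lam * t1 + (1 - lam) * t2) / s2 =
             lam * (t1 / s2) + (1 - lam) * (t2 / s2)); last by field.
set L := ln _; set L1 := ln (1 + t1 / s2); set L2 := ln (1 + t2 / s2).
set y1 := t1 / s2; set y2 := t2 / s2.
move=> jensen.
have -> : lam * ((1 + y1) * L1 - (1 + c) * y1) +
          (1 - lam) * ((1 + y2) * L2 - (1 + c) * y2) =
          lam * ((1 + y1) * L1) + (1 - lam) * ((1 + y2) * L2)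
          - (1 + c) * (lam * y1 + (1 - lam) * y2) by ring.
lra.
Qed.

End ScalarConstraint.

Lemma ctrmx_col_mx (R : rcfType) m1 m2 n
    (A : 'M[R[i]]_(m1, n)) (B : 'M[R[i]]_(m2, n)) :
  ctrmx (col_mx A B) = row_mx (ctrmx A) (ctrmx B).
Proof. by rewrite /ctrmx map_col_mx tr_col_mx. Qed.

Lemma ctrmx_scalar_mx (R : rcfType) (z : R[i]) : ctrmx (z%:M : 'M_1) = (z^*)%:M.
Proof. by rewrite /ctrmx map_scalar_mx tr_scalar_mx. Qed.

Lemma Amx_outer (R : rcfType) N (a : 'cV[R[i]]_N) (h : R[i]) :
  Amx a h = col_mx a h%:M *m ctrmx (col_mx a h%:M).
Proof.
by rewrite ctrmx_col_mx ctrmx_scalar_mx mul_col_row /Amx -scalar_mxM sqr_normc.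
Qed.

Lemma trAW_ge0 (R : rcfType) N (a : 'cV[R[i]]_N) (h : R[i]) W :
  hermitian_psd W -> 0 <= trAW a h W.
Proof.
case=> _ /(_ (col_mx a h%:M)) v_psd.
rewrite /trAW Amx_outer -mulmxA mxtrace_mulC trace_mx11; move: v_psd.
by case: (_ 0 0) => x y; rewrite lecE /= => /andP[_].
Qed.

Lemma trAW_comb (R : rcfType) N (a : 'cV[R[i]]_N) (h : R[i]) W1 W2 (l1 l2 : R) :
  trAW a h (l1%:C *: W1 + l2%:C *: W2) = l1 * trAW a h W1 + l2 * trAW a h W2.
Proof.
rewrite /trAW mulmxDr -!scalemxAr mxtraceD !mxtraceZ.
by case: (\tr _) => x1 y1; case: (\tr _) => x2 y2 /=; ring.
Qed.

Lemma constr2E (R : realType) N (a : 'cV[R[i]]_N) (h : R[i]) (s2 c : R) W :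
  constr2 a h s2 c W = covert_lhs s2 c (trAW a h W).
Proof. by []. Qed.

Theorem lemma1 (R : realType) (N : nat) (a : 'cV[R[i]]_N) (h : R[i])
  (s2 eps L : R) (hs2 : 0 < s2) (heps : 0 < eps) (hL : 0 < L) :
  (forall W : 'M[R[i]]_(N + 1), hermitian_psd W ->
     (constr1 a h s2 W <= 2 * eps ^+ 2 / L <->
      constr2 a h s2 (2 * eps ^+ 2 / L) W <= 2 * eps ^+ 2 / L))
  /\
  (forall (W1 W2 : 'M[R[i]]_(N + 1)) (lam : R),
     hermitian_psd W1 -> hermitian_psd W2 -> 0 <= lam <= 1 ->
     constr2 a h s2 (2 * eps ^+ 2 / L) ((lam%:C) *: W1 + ((1 - lam)%:C) *: W2)
     <= lam * constr2 a h s2 (2 * eps ^+ 2 / L) W1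
        + (1 - lam) * constr2 a h s2 (2 * eps ^+ 2 / L) W2).
Proof.
have trAW_gt W : hermitian_psd W -> -s2 < trAW a h W.
  by move=> /(trAW_ge0 a h); lra.
split=> [W psdW | W1 W2 lam psdW1 psdW2 lam01]; rewrite !constr2E.
  exact: covert_constraint_equiv (trAW_gt W psdW).
rewrite trAW_comb.
exact: convex_covert_lhs (trAW_gt W1 psdW1) (trAW_gt W2 psdW2) lam01.
Qed.
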